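(* Let $G_i$ be a graph of order $n_i$, minimum degree $\delta_i$ and maximum degree $\Delta_i$, $i\in\{1,2\}$. Let $k_i\in\{2-\Delta_i,\dots,\Delta_i\}$ for $i\in\{1,2\}$ and let $k'=\max\{k_1-\delta_2,\;k_2-\delta_1,\;\min\{k_2+\Delta_1,\,k_1+\Delta_2\}\}$. Then for every integer $k\in\{k',\dots,\Delta_1+\Delta_2\}$, $$\phi_k^o(G_1\times G_2)\ge n_1\phi_{k_2}^o(G_2)+n_2\phi_{k_1}^o(G_1)-\phi_{k_1}^o(G_1)\phi_{k_2}^o(G_2).$$
   Context: All graphs are finite and simple. For a graph $G=(V,E)$, a set $S\subseteq V$ and $v\in V$, let $\delta_S(v)=|\{u\in S: uv\in E\}|$, $\overline{S}=V\setminus S$, and let $\partial S$ be the set of vertices of $\overline S$ adjacent to at least one vertex of $S$. For an integer $k$, a non-empty set $S\subseteq V$ is an offensive $k$-alliance if $\delta_S(v)\ge \delta_{\overline S}(v)+k$ for every $v\in \partial S$. A set $X\subseteq V$ is an offensive $k$-alliance free set ($k$-oaf set) if no offensive $k$-alliance $S$ satisfies $S\subseteq X$. $\phi_k^o(G)$ denotes the maximum cardinality of a $k$-oaf set in $G$. The Cartesian product $G_1\times G_2$ of $G_1=(V_1,E_1)$, $G_2=(V_2,E_2)$ has vertex set $V_1\times V_2$, with $(a,b)$ adjacent to $(c,d)$ iff either $a=c$ and $bd\in E_2$, or $b=d$ and $ac\in E_1$. *)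

From HB Require Import structures.
From mathcomp Require Import all_boot all_order all_algebra.
Set Implicit Arguments. Unset Strict Implicit. Unset Printing Implicit Defensive.
Import Order.TTheory GRing.Theory Num.Theory.

Definition simple_graph (T : finType) (e : rel T) : Prop :=
  symmetric e /\ irreflexive e.

Definition deg_in (T : finType) (e : rel T) (S : {set T}) (v : T) : nat :=
  #|[set u in S | e u v]|.

Definition deg (T : finType) (e : rel T) (v : T) : nat := deg_in e setT v.

(* minimum and maximum degree (for an empty vertex set both are 0) *)
Definition mindeg (T : finType) (e : rel T) : nat :=
  \big[minn/#|T|]_(v : T) deg e v.
Definition maxdeg (T : finType) (e : rel T) : nat := \max_(v : T) deg e v.

Definition boundary (T : finType) (e : rel T) (S : {set T}) : {set T} :=
  [set v in ~: S | [exists u in S, e u v]].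

Definition off_alliance (T : finType) (e : rel T) (k : int) (S : {set T}) : bool :=
  (S != set0) &&
  [forall v in boundary e S,
     ((deg_in e S v)%:Z >= (deg_in e (~: S) v)%:Z + k)%R].

Definition oaf (T : finType) (e : rel T) (k : int) (X : {set T}) : bool :=
  [forall S : {set T}, (S \subset X) ==> ~~ off_alliance e k S].

Definition phi_o (T : finType) (e : rel T) (k : int) : nat :=
  \max_(X : {set T} | oaf e k X) #|X|.

Definition cart_rel (T1 T2 : finType) (e1 : rel T1) (e2 : rel T2) : rel (T1 * T2) :=
  fun x y => ((x.1 == y.1) && e2 x.2 y.2) || ((x.2 == y.2) && e1 x.1 y.1).

From HB Require Import structures.
From mathcomp Require Import all_boot all_order all_algebra.
From mathcomp Require Import zify ring.
Import Order.TTheory GRing.Theory Num.Theory.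
Set Implicit Arguments. Unset Strict Implicit. Unset Printing Implicit Defensive.

(* Let X1 be a k1-oaf set of G1 and X2 a k2-oaf set of G2.  The set
   X = (X1 x V2) u (V1 x X2) has n1|X2| + n2|X1| - |X1||X2| elements, so it
   suffices to show that X is a k-oaf set of G1 x G2.  Take a nonempty S
   contained in X.  Either some (a0, b) in S has b outside X2; then the row
   {a | (a, b) in S} lies in X1, so some vertex a witnesses that it is not a
   k1-alliance of G1, and (a, b) witnesses that S is not a k-alliance as soon
   as k1 + Delta2 <= k.  Or the projection of S on V2 lies in X2; a vertex b
   witnessing that this projection is not a k2-alliance of G2 lifts to a
   witness (a, b) for S as soon as k2 - delta1 <= k.  The mirror case
   (k2 + Delta1 <= k and k1 - delta2 <= k) follows by exchanging the factors,
   using that oaf sets are preserved by graph isomorphisms. *)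

Definition violated (T : finType) (e : rel T) (k : int) (S : {set T}) (v : T)
  : bool :=
  (v \in boundary e S) &&
  ((deg_in e S v)%:Z < (deg_in e (~: S) v)%:Z + k)%R.

Section SingleGraph.
Variables (T : finType) (e : rel T).

Lemma oafP (k : int) (X : {set T}) :
  reflect (forall S : {set T}, S \subset X -> S != set0 -> exists v, violated e k S v)
          (oaf e k X).
Proof.
apply: (iffP forallP) => [oX S SX S0 | viol S]; last first.
  apply/implyP => SX; rewrite /off_alliance negb_and.
  have [-> //|S0] := eqVneq S set0.
  have [v /andP [vb hv]] := viol S SX S0.
  rewrite negb_forall; apply/orP; right; apply/existsP; exists v.
  by rewrite negb_imply vb -ltNge.
move: (implyP (oX S) SX); rewrite /off_alliance S0 negb_forall.
case/existsP => v; rewrite negb_imply -ltNge => hv; by exists v.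
Qed.

Lemma oaf_set0 (k : int) : oaf e k set0.
Proof. by apply/oafP => S; rewrite subset0 => /eqP ->; rewrite eqxx. Qed.

Lemma phi_o_attained (k : int) : exists2 X, oaf e k X & phi_o e k = #|X|.
Proof.
have ne : 0 < #|[pred X : {set T} | oaf e k X]|.
  by apply/card_gt0P; exists set0; rewrite inE oaf_set0.
have [X oX phiX] := eq_bigmax_cond (fun X : {set T} => #|X|) ne.
by exists X => //; rewrite /phi_o -phiX.
Qed.

Lemma oaf_le_phi_o (k : int) (X : {set T}) : oaf e k X -> #|X| <= phi_o e k.
Proof. exact: leq_bigmax_cond. Qed.

Lemma deg_in_subset (A B : {set T}) v :
  A \subset B -> deg_in e A v <= deg_in e B v.
Proof.
move=> AB; apply: subset_leq_card; apply/subsetP => u; rewrite !inE.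
by case/andP => uA ->; rewrite (subsetP AB u uA).
Qed.

Lemma deg_in_set0 v : deg_in e set0 v = 0.
Proof. by apply/eqP; rewrite cards_eq0; apply/eqP/setP => u; rewrite !inE. Qed.

Lemma deg_in_le_maxdeg (A : {set T}) v : deg_in e A v <= maxdeg e.
Proof.
apply: leq_trans (leq_bigmax v); exact/deg_in_subset/subsetT.
Qed.

Lemma mindeg_le_deg v : mindeg e <= deg e v.
Proof.
rewrite /mindeg; move: (mem_index_enum v); elim: (index_enum T) => [//|x r IH].
rewrite inE big_cons => /orP [/eqP <- | /IH]; first exact: geq_minl.
exact/leq_trans/geq_minr.
Qed.

End SingleGraph.

Section Isomorphism.
Variables (T T' : finType) (e : rel T) (e' : rel T') (f : T -> T') (g : T' -> T).
Hypotheses (fK : cancel f g) (gK : cancel g f).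
Hypothesis f_edge : forall x y, e' (f x) (f y) = e x y.

Lemma deg_in_iso (S : {set T'}) v : deg_in e' S (f v) = deg_in e (f @^-1: S) v.
Proof.
rewrite /deg_in -(card_imset _ (can_inj fK)) (can2_imset_pre _ fK gK).
by apply: eq_card => u; rewrite !inE -{2}(gK u) f_edge gK.
Qed.

Lemma violated_iso (k : int) (S : {set T'}) v :
  violated e k (f @^-1: S) v -> violated e' k S (f v).
Proof.
rewrite /violated !deg_in_iso preimsetC; case/andP => vb ->; rewrite andbT.
move: vb; rewrite !inE => /andP [vS /existsP [u /andP [uS euv]]].
rewrite vS; apply/existsP; exists (f u); rewrite f_edge euv andbT.
by rewrite inE in uS.
Qed.

Lemma oaf_iso (k : int) (X : {set T}) : oaf e k X -> oaf e' k (f @: X).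
Proof.
move=> /oafP oX; apply/oafP => S SX /set0Pn [y yS].
have preX : f @^-1: S \subset X.
  apply/subsetP => x; rewrite inE => /(subsetP SX).
  by rewrite mem_imset //; exact: can_inj fK.
have pre0 : f @^-1: S != set0 by apply/set0Pn; exists (g y); rewrite inE gK.
have [v hv] := oX _ preX pre0.
by exists (f v); exact: violated_iso.
Qed.

End Isomorphism.

Section Product.
Variables (T1 T2 : finType) (e1 : rel T1) (e2 : rel T2).
Hypothesis e1_irr : irreflexive e1.

Local Notation e := (cart_rel e1 e2).

Definition row (S : {set T1 * T2}) (b : T2) : {set T1} := [set a | (a, b) \in S].
Definition col (S : {set T1 * T2}) (a : T1) : {set T2} := [set b | (a, b) \in S].

Definition proj2 (S : {set T1 * T2}) : {set T2} :=
  [set b | [exists a, (a, b) \in S]].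

(* A neighbour of (a, b) in S lies either in its row or in its column, and
   not in both since e1 is irreflexive. *)
Lemma deg_in_cart S a b :
  deg_in e S (a, b) = deg_in e1 (row S b) a + deg_in e2 (col S a) b.
Proof.
rewrite /deg_in.
have -> : [set u in S | e u (a, b)] =
  ((fun a' => (a', b)) @: [set a' in row S b | e1 a' a]) :|:
  ((fun b' => (a, b')) @: [set b' in col S a | e2 b' b]).
  apply/setP => -[x y]; rewrite !inE /cart_rel /=; apply/idP/idP.
  - case/andP => xyS /orP [/andP [/eqP ? h] | /andP [/eqP ? h]]; subst.
    + by apply/orP; right; apply/imsetP; exists y; rewrite ?inE ?xyS.
    + by apply/orP; left; apply/imsetP; exists x; rewrite ?inE ?xyS.
  - by case/orP => /imsetP [z]; rewrite !inE => /andP [zS h] [-> ->];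
      rewrite zS /= ?eqxx ?h ?orbT.
rewrite cardsU !card_imset; try by move=> u v [].
suff -> : ((fun a' => (a', b)) @: [set a' in row S b | e1 a' a]) :&:
  ((fun b' => (a, b')) @: [set b' in col S a | e2 b' b]) = set0.
  by rewrite cards0 subn0.
apply/setP => -[x y]; rewrite !inE; apply/negP.
case/andP => /imsetP [z]; rewrite !inE => /andP [_ h1] [-> ->].
by case/imsetP => w _ [ea _]; rewrite ea e1_irr in h1.
Qed.

Lemma rowC S b : row (~: S) b = ~: row S b.
Proof. by apply/setP => x; rewrite !inE. Qed.

Lemma colC S a : col (~: S) a = ~: col S a.
Proof. by apply/setP => x; rewrite !inE. Qed.

(* A violated vertex of a row of S is a violated vertex of S, the column
   contributing at most maxdeg e2 extra neighbours in S. *)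
Lemma violated_row (k1 k : int) S a b :
  (k1 + (maxdeg e2)%:Z <= k)%R ->
  violated e1 k1 (row S b) a -> violated e k S (a, b).
Proof.
move=> hk /andP []; rewrite !inE => /andP [abS /existsP [a' /andP [a'bS ea]]] hv.
apply/andP; split.
  rewrite !inE abS /=; apply/existsP; exists (a', b).
  by rewrite inE in a'bS; rewrite a'bS /cart_rel eqxx ea orbT.
rewrite !deg_in_cart rowC colC.
have := deg_in_le_maxdeg e2 (col S a) b; lia.
Qed.

(* A violated vertex b of the projection of S on the second factor lifts to a
   violated vertex (a, b) of S: its row in S is empty, and its column in S is
   contained in the projection. *)
Lemma violated_proj2 (k2 k : int) S b :
  (k2 - (mindeg e1)%:Z <= k)%R ->
  violated e2 k2 (proj2 S) b -> exists a, violated e k S (a, b).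
Proof.
move=> hk /andP []; rewrite inE => /andP [bP /existsP [b' /andP [b'P eb]]] hv.
move: (b'P); rewrite inE => /existsP [a ab'S]; exists a.
have row0 : row S b = set0.
  apply/setP => x; rewrite !inE; apply/negP => xbS.
  by move: bP; rewrite !inE negb_exists => /forallP /(_ x); rewrite xbS.
have colP : col S a \subset proj2 S.
  by apply/subsetP => y; rewrite !inE => ayS; apply/existsP; exists a.
apply/andP; split.
  rewrite !inE; apply/andP; split.
    by apply/negP => abS; move: bP; rewrite !inE; case/negP; apply/existsP; exists a.
  by apply/existsP; exists (a, b'); rewrite ab'S /cart_rel /= eqxx eb.
rewrite !deg_in_cart rowC colC row0 setC0 /=.
have colCP : ~: proj2 S \subset ~: col S a by rewrite setCS.
have := deg_in_subset e2 b colP; have := deg_in_subset e2 b colCP.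
have := mindeg_le_deg e1 a; rewrite deg_in_set0 /deg; lia.
Qed.

Definition Xset (X1 : {set T1}) (X2 : {set T2}) : {set T1 * T2} :=
  [set x | (x.1 \in X1) || (x.2 \in X2)].

Lemma oaf_Xset_left (X1 : {set T1}) (X2 : {set T2}) (k1 k2 k : int) :
  (k1 + (maxdeg e2)%:Z <= k)%R -> (k2 - (mindeg e1)%:Z <= k)%R ->
  oaf e1 k1 X1 -> oaf e2 k2 X2 -> oaf e k (Xset X1 X2).
Proof.
move=> hk1 hk2 /oafP o1 /oafP o2; apply/oafP => S SX S0.
have [/existsP [[a0 b] /andP [a0bS /= bX2]] | ] :=
  boolP [exists u in S, u.2 \notin X2].
- have rowX1 : row S b \subset X1.
    apply/subsetP => x; rewrite inE => /(subsetP SX).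
    by rewrite inE /= (negbTE bX2) orbF.
  have row0 : row S b != set0 by apply/set0Pn; exists a0; rewrite inE.
  have [a ha] := o1 _ rowX1 row0.
  by exists (a, b); exact: violated_row ha.
- rewrite negb_exists => /forallP inX2.
  have projX2 : proj2 S \subset X2.
    apply/subsetP => b; rewrite inE => /existsP [a abS].
    by move: (inX2 (a, b)); rewrite abS negbK.
  have proj0 : proj2 S != set0.
    case/set0Pn: S0 => -[a b] abS.
    by apply/set0Pn; exists b; rewrite inE; apply/existsP; exists a.
  have [b hb] := o2 _ projX2 proj0.
  have [a ha] := violated_proj2 hk2 hb; by exists (a, b).
Qed.

Lemma card_Xset (X1 : {set T1}) (X2 : {set T2}) :
  ((#|Xset X1 X2|)%:Z = (#|T1|)%:Z * (#|X2|)%:Z + (#|T2|)%:Z * (#|X1|)%:Z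
                         - (#|X1|)%:Z * (#|X2|)%:Z)%R.
Proof.
have compl : ~: Xset X1 X2 = setX (~: X1) (~: X2).
  by apply/setP => -[x y]; rewrite !inE negb_or.
have card_split : #|Xset X1 X2| + #|~: X1| * #|~: X2| = #|T1| * #|T2|.
  by rewrite -cardsX -compl cardsC card_prod.
move: card_split; rewrite -(cardsC X1) -(cardsC X2).
move: #|Xset _ _| #|X1| #|X2| #|~: X1| #|~: X2| => x p q p' q' /(congr1 Posz).
rewrite !PoszD !PoszM => /(canRL (addrK _)) ->; ring.
Qed.

End Product.

Lemma cart_rel_swap (T1 T2 : finType) (e1 : rel T1) (e2 : rel T2) x y :
  cart_rel e1 e2 (swap_pair x) (swap_pair y) = cart_rel e2 e1 x y.
Proof. by rewrite /cart_rel orbC. Qed.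

Lemma oaf_Xset (T1 T2 : finType) (e1 : rel T1) (e2 : rel T2)
    (X1 : {set T1}) (X2 : {set T2}) (k1 k2 k : int) :
  irreflexive e1 -> irreflexive e2 ->
  (k1 - (mindeg e2)%:Z <= k)%R -> (k2 - (mindeg e1)%:Z <= k)%R ->
  (Num.min (k2 + (maxdeg e1)%:Z) (k1 + (maxdeg e2)%:Z) <= k)%R ->
  oaf e1 k1 X1 -> oaf e2 k2 X2 -> oaf (cart_rel e1 e2) k (Xset X1 X2).
Proof.
move=> irr1 irr2 hk1 hk2; rewrite ge_min => /orP [hk21 | hk12] o1 o2; last first.
  exact: (oaf_Xset_left irr1 hk12 hk2 o1 o2).
have o21 := oaf_Xset_left irr2 hk21 hk1 o2 o1.
have -> : Xset X1 X2 = swap_pair @: Xset X2 X1.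
  rewrite (can2_imset_pre _ swap_pairK swap_pairK).
  by apply/setP => -[x y]; rewrite !inE orbC.
exact: (oaf_iso swap_pairK swap_pairK (@cart_rel_swap _ _ e1 e2)).
Qed.

Theorem corollary4 (T1 T2 : finType) (e1 : rel T1) (e2 : rel T2)
  (hG1 : simple_graph e1) (hG2 : simple_graph e2) (k1 k2 k : int) :
  (2 - (maxdeg e1)%:Z <= k1)%R -> (k1 <= (maxdeg e1)%:Z)%R ->
  (2 - (maxdeg e2)%:Z <= k2)%R -> (k2 <= (maxdeg e2)%:Z)%R ->
  (Num.max (k1 - (mindeg e2)%:Z)
     (Num.max (k2 - (mindeg e1)%:Z)
        (Num.min (k2 + (maxdeg e1)%:Z) (k1 + (maxdeg e2)%:Z))) <= k)%R ->
  (k <= (maxdeg e1)%:Z + (maxdeg e2)%:Z)%R ->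
  ((#|T1|)%:Z * (phi_o e2 k2)%:Z + (#|T2|)%:Z * (phi_o e1 k1)%:Z
     - (phi_o e1 k1)%:Z * (phi_o e2 k2)%:Z
   <= (phi_o (cart_rel e1 e2) k)%:Z)%R.
Proof.
move=> _ _ _ _ + _; rewrite !ge_max => /and3P [hk1 hk2 hkmin].
have [X1 o1 ->] := phi_o_attained e1 k1.
have [X2 o2 ->] := phi_o_attained e2 k2.
have oX := oaf_Xset hG1.2 hG2.2 hk1 hk2 hkmin o1 o2.
by rewrite -card_Xset lez_nat; exact: oaf_le_phi_o.
Qed.
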